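(* Let $X$ be an infinite ultrahomogeneous chain with the order topology, $G=(\mathrm{Aut}(X),\tau_p)$, and $cX=c_mX/(\inf\sim\sup)$. Then neither $e_{c_mX}G$ nor $e_{cX}G$ is an sm-compactification of $G$.
   Context: Ultrahomogeneous chain: for all $x_1<\dots<x_n$, $y_1<\dots<y_n$ there is an order automorphism with $g(x_k)=y_k$. $\tau_p$: topology of pointwise convergence. $c_mX$: $X$ plus one point per gap (cut $(A,B)$, $A<B$, $A$ without max, $B$ without min, including $\inf$, $\sup$), order topology. $e_KG$ is the closure of $\{x\mapsto gx:g\in G\}$ in $K^K$ with product topology, a right topological monoid under composition. An sm-compactification of $G$ is a compactification $bG$ with continuous extended left action of $G$ which is a semitopological monoid (separately continuous multiplication) whose multiplication restricted to $G\times bG$ is the extended left action. *)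

From HB Require Import structures.
From mathcomp Require Import all_boot all_order all_algebra generic_quotient.
From mathcomp Require Import all_classical all_reals topology.
Unset Printing Implicit Defensive.
Import Order.TTheory.
Local Open Scope classical_set_scope.
Local Open Scope quotient_scope.

Definition order_aut {d} {X : orderType d} (g : X -> X) : Prop :=
  bijective g /\ {mono g : x y / (x <= y)%O}.

Definition ultrahomogeneous {d} (X : orderType d) : Prop :=
  forall (n : nat) (x y : 'I_n -> X),
    (forall i j : 'I_n, (i < j)%N -> (x i < x j)%O) ->
    (forall i j : 'I_n, (i < j)%N -> (y i < y j)%O) ->
    exists g : X -> X, order_aut g /\ forall k, g (x k) = y k.

Definition AutSet {d} (X : orderType d)
  : set {ptws order_topology X -> order_topology X} :=
  [set g | @order_aut d (order_topology X) g].

Definition AutG {d} (X : orderType d) : topologicalType := set_type (AutSet X).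

Section AutGroup.
Context {d} (X : orderType d).

Lemma order_aut_comp (g h : order_topology X -> order_topology X) :
  order_aut g -> order_aut h -> order_aut (g \o h).
Proof.
move=> [bg mg] [bh mh]; split; first exact: bij_comp.
by move=> x y /=; rewrite mg mh.
Qed.

Lemma order_aut_id : order_aut (@id (order_topology X)).
Proof. by split => //; exists id. Qed.

Definition Aut_mul (g h : AutG X) : AutG X :=
  exist _ (sval g \o sval h : {ptws order_topology X -> order_topology X})
    (mem_set (order_aut_comp _ _ (set_mem (svalP g)) (set_mem (svalP h)))).

Definition Aut_one : AutG X :=
  exist _ (id : {ptws order_topology X -> order_topology X})
    (mem_set order_aut_id).

End AutGroup.

(** A point of c_m X is represented by a lower part of a cut of X:
    - the point x of X is represented by the closed ray ]-oo, x];
    - the gap (A, B) (A < B, A u B = X, A without max, B without min,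
      A or B possibly empty: this includes inf = (set0, X) and
      sup = (X, set0)) is represented by A.
    The order of c_m X is inclusion of these lower parts. *)
Section Cm.
Context {d} (X : orderType d).

Definition downclosed (A : set X) : Prop :=
  forall x y : X, (y <= x)%O -> A x -> A y.

Definition no_max (A : set X) : Prop :=
  forall x, A x -> exists2 y, A y & (x < y)%O.

Definition no_min (B : set X) : Prop :=
  forall x, B x -> exists2 y, B y & (y < x)%O.

Definition is_gap (A : set X) : Prop :=
  [/\ downclosed A, no_max A & no_min (~` A)].

Definition cm_set : set (set X) :=
  [set A | (exists x : X, A = [set y | (y <= x)%O]) \/ is_gap A].

Definition cm_type := set_type cm_set.
HB.instance Definition _ := Choice.copy cm_type (set_type cm_set).

Lemma cm_downclosed (a : cm_type) : downclosed (sval a).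
Proof.
case: a => A /= /set_mem [[x ->]|[]//] u v vu /= ux.
exact: le_trans vu ux.
Qed.

Definition cm_le (a b : cm_type) : bool := `[< sval a `<=` sval b >].

Lemma cm_le_refl : reflexive cm_le.
Proof. by move=> a; apply/asboolP. Qed.

Lemma cm_le_anti : antisymmetric cm_le.
Proof.
move=> a b /andP[/asboolP ab /asboolP ba]; apply: val_inj => /=.
by apply/seteqP; split.
Qed.

Lemma cm_le_trans : transitive cm_le.
Proof.
move=> b a c /asboolP ab /asboolP bc; apply/asboolP.
exact: subset_trans ab bc.
Qed.

HB.instance Definition _ :=
  Order.Le_isPOrder.Build Order.default_display cm_type
    cm_le_refl cm_le_anti cm_le_trans.

Lemma cm_le_total : total (<=%O : rel cm_type).
Proof.
move=> a b; rewrite /Order.le /=.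
have [ab|nab] := pselect (sval a `<=` sval b).
  by apply/orP; left; apply/asboolP.
apply/orP; right; apply/asboolP => y by_.
move/existsNP: nab => [x /not_implyP [ax nbx]].
have [xy|yx] := leP x y.
  by exfalso; apply: nbx; exact: (cm_downclosed b _ _ xy by_).
exact: (cm_downclosed a _ _ (ltW yx) ax).
Qed.

HB.instance Definition _ :=
  Order.POrder_isTotal.Build Order.default_display cm_type cm_le_total.

Definition cmX := order_topology cm_type.

(** inf = (set0, X) and sup = (X, set0) are the points represented by
    set0 and setT; cX = c_m X / (inf ~ sup) *)
Definition inf_sup_rel (a b : cmX) : bool :=
  let f (c : cmX) : set X := if sval c == setT then set0 else sval c in
  (a == b) || (f a == f b) && (sval a \in [set set0; setT])
                           && (sval b \in [set set0; setT]).

Lemma inf_sup_refl : reflexive inf_sup_rel.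
Proof. by move=> a; rewrite /inf_sup_rel eqxx. Qed.

Lemma inf_sup_sym : symmetric inf_sup_rel.
Proof.
move=> a b; rewrite /inf_sup_rel eq_sym; congr (_ || _).
by rewrite [X in X && _ && _]eq_sym andbAC andbA.
Qed.

Lemma inf_sup_trans : transitive inf_sup_rel.
Proof.
move=> b a c; rewrite /inf_sup_rel.
case/orP=> [/eqP ->//|/andP[/andP[/eqP fab Ha] Hb] ].
case/orP=> [/eqP <-|/andP[/andP[/eqP fbc Hb'] Hc] ].
  by apply/orP; right; rewrite fab eqxx Ha Hb.
by apply/orP; right; rewrite fab fbc eqxx Ha Hc.
Qed.

Definition inf_sup_equiv : equiv_rel cmX :=
  EquivRel inf_sup_rel inf_sup_refl inf_sup_sym inf_sup_trans.

Definition cX := quotient_topology {eq_quot inf_sup_equiv}.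

Lemma image_cm (g : X -> X) (A : set X) :
  order_aut g -> cm_set A -> cm_set (g @` A).
Proof.
move=> [[h gh hg] mg].
have ltg : {mono g : x y / (x < y)%O} by move=> x y; rewrite !ltNge mg.
have inj : injective g := can_inj gh.
case=> [[x ->]|[dA nmA nmB]]; [left; exists (g x)|right; split].
- apply/seteqP; split => [t [y yx yt]|z zx] /=; first by subst t; rewrite mg.
  by exists (h z) => //=; rewrite -mg hg.
- move=> t z zx [y Ay yt]; subst t; exists (h z); last by rewrite hg.
  by apply: (dA y); rewrite // -mg hg.
- move=> t [x Ax xt]; subst t; have [y Ay xy] := nmA x Ax.
  by exists (g y); [exists y|rewrite ltg].
- move=> z nz; have nhz : ~ A (h z) by move=> Ahz; apply: nz; exists (h z).
  have [y nAy yz] := nmB _ nhz; exists (g y).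
    by move=> [w Aw /inj wy]; apply: nAy; rewrite -wy.
  by rewrite -(hg z) ltg.
Qed.

Definition act_m (g : AutG X) (a : cmX) : cmX :=
  exist _ (sval g @` sval a)
    (mem_set (image_cm _ _ (set_mem (svalP g)) (set_mem (svalP a)))).

Definition act_c (g : AutG X) (q : cX) : cX :=
  \pi_cX (act_m g (repr q)).

End Cm.

Definition ellis {G K : topologicalType} (act : G -> K -> K)
  : set {ptws K -> K} :=
  closure (range (fun g : G => (act g : {ptws K -> K}))).

(** A compactification bG of G, given as a subspace B of an ambient
    topological space T, together with a map nu : G -> B:
    B is compact Hausdorff, nu is continuous with dense image. *)
Definition compactification_in {G T : topologicalType} (B : set T)
    (nu : G -> T) : Prop :=
  [/\ compact B,
      (forall p q, B p -> B q -> p <> q ->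
         exists U V : set T, [/\ open U, open V, U p, V q &
                                 U `&` V `&` B = set0]),
      (forall g, B (nu g)),
      continuous nu &
      B `<=` closure (range nu)].

Definition sm_compactification (G : topologicalType)
    (gmul : G -> G -> G) (gone : G)
    (T : topologicalType) (B : set T) (nu : G -> T)
    (act : G -> T -> T) (mul : T -> T -> T) : Prop :=
  [/\ compactification_in B nu,
      [/\ (forall g b, B b -> B (act g b)),
          {within [set: G] `*` B, continuous (fun x : G * T => act x.1 x.2)},
          (forall b, B b -> act gone b = b),
          (forall g h b, B b -> act (gmul g h) b = act g (act h b)) &
          (forall g h, act g (nu h) = nu (gmul g h))],
      [/\ (forall a b, B a -> B b -> B (mul a b)),
          (exists2 u, B u & forall a, B a -> mul u a = a /\ mul a u = a),
          (forall a b c, B a -> B b -> B c -> mul a (mul b c) = mul (mul a b) c) &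
          (forall a, B a -> {within B, continuous (mul a)} /\
                            {within B, continuous (fun b => mul b a)})] &
      (forall g b, B b -> mul (nu g) b = act g b)].

Definition ellis_is_sm {G : topologicalType} (gmul : G -> G -> G) (gone : G)
    {K : topologicalType} (act : G -> K -> K) : Prop :=
  @sm_compactification G gmul gone {ptws K -> K} (ellis act)
    (fun g => (act g : {ptws K -> K}))
    (fun g (p : {ptws K -> K}) => (act g \o p : {ptws K -> K}))
    (fun p q : {ptws K -> K} => (p \o q : {ptws K -> K})).

From HB Require Import structures.
From mathcomp Require Import all_boot all_order all_algebra generic_quotient.
From mathcomp Require Import all_classical all_reals topology.
Import Order.TTheory.
Local Open Scope classical_set_scope.

(* If e_K G were an sm-compactification, left multiplication by any p in
   e_K G would be continuous on e_K G, so whenever the orbit maps of g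
   converge pointwise to b, also p (g k) would converge to p (b k).  Fix a
   point x0.  Ultrahomogeneity provides automorphisms that push x0 slightly
   up while squeezing all other proper cuts onto x0; they converge to the
   map b_m collapsing every proper cut to x0.  It also provides automorphisms
   sending x0 far down while squeezing the cuts above x0 onto x0; they
   converge to the map p_m sending the cuts below x0 to inf and the other
   proper cuts to x0.  Now p_m (b_m x0) = inf, whereas p_m (g x0) = x0 for
   the first automorphisms.  This survives the passage to cX because x0 is
   not identified with inf. *)

Lemma ptws_cvg_of_coord {U : Type} {V : topologicalType}
    {F : set_system (U -> V)} {f : U -> V} : Filter F ->
  (forall t, (fun g => g t) @ F --> f t) -> F --> (f : {ptws U -> V}).
Proof.
move=> FF cvg_coord; apply/cvg_sup => t; apply/cvg_image.
  by apply/seteqP; split => // v _; exists (fun=> v).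
move=> W /cvg_coord FW; exists ((fun g => g t) @^-1` W) => //.
by apply/seteqP; split => [v [g Wg <-]//|v Wv]; exists (fun=> v).
Qed.

Section EllisNotSm.
Context {G K : topologicalType} {act : G -> K -> K}.

Let orbit (g : G) : {ptws K -> K} := act g.

Lemma ellis_cvg {F : set_system G} {f : K -> K} : ProperFilter F ->
  orbit @ F --> (f : {ptws K -> K}) -> ellis act f.
Proof.
move=> PF orbit_f; rewrite /ellis closureEcvg.
exists (orbit @ F); first exact: fmap_proper_filter.
split=> // S rangeS; change (F [set g | S (orbit g)]).
by apply: filterE => g; apply: rangeS; exists g.
Qed.

Lemma not_ellis_is_sm (gmul : G -> G -> G) (gone : G) (F : set_system G)
    (p b : K -> K) (k : K) (W : set K) :
  ProperFilter F -> ellis act p -> orbit @ F --> (b : {ptws K -> K}) ->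
  open W -> W (p (b k)) -> F [set g | ~ W (p (act g k))] ->
  ~ ellis_is_sm gmul gone act.
Proof.
move=> PF ellis_p orbit_b oW Wpbk FnW [_ _ [_ _ _ sep_cont] _].
have ellis_b := ellis_cvg PF orbit_b.
have /subspace_continuousP/(_ _ ellis_b) p_cont := (sep_cont _ ellis_p).1.
have orbit_b_within : orbit @ F --> within (ellis act) (nbhs (b : {ptws K -> K})).
  move=> U /orbit_b Fwithin; change (F [set g | U (orbit g)]).
  have : F [set g | ellis act (orbit g) -> U (orbit g)] := Fwithin.
  by apply: filterS => g; apply; apply: subset_closure; exists g.
have p_orbit_pb : (fun g => (p \o act g : {ptws K -> K})) @ F -->
                   (p \o b : {ptws K -> K}).
  exact: cvg_trans (cvg_app _ orbit_b_within) p_cont.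
have pgk_pbk : (fun g => p (act g k)) @ F --> p (b k).
  exact: cvg_trans (cvg_app (@proj K (fun=> K) k) p_orbit_pb)
                   (@proj_continuous K (fun=> K) k _).
have FW : F [set g | W (p (act g k))] by apply: pgk_pbk; exact: open_nbhs_nbhs.
by have [g []] := filter_ex (filterI FW FnW).
Qed.

End EllisNotSm.

Local Open Scope order_scope.
Local Open Scope quotient_scope.

Lemma infinite_set_exists_neq (T : eqType) :
  infinite_set [set: T] -> exists x y : T, x != y.
Proof.
move=> infT; have [x _] : [set: T] !=set0.
  by apply/set0P/eqP => T0; apply: infT; rewrite T0.
apply: contrapT => nneq; apply: infT; apply: (sub_finite_set _ (finite_set1 x)).
by move=> y _; apply: contrapT => yx; apply: nneq; exists y, x; apply/eqP.
Qed.

Lemma order_aut_lt {d} {X : orderType d} (g : X -> X) :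
  order_aut g -> {mono g : x y / x < y}.
Proof. by move=> [_ mg] x y; rewrite !ltNge mg. Qed.

Section UltrahomogeneousChain.
Context {d : Order.disp_t} (X : orderType d).
Hypothesis ntX : exists x y : X, x != y.
Hypothesis uhX : ultrahomogeneous X.

Lemma uh_map_seq (x0 : X) (s t : seq X) : sorted <%O s -> sorted <%O t ->
  size s = size t -> exists g : X -> X, order_aut g /\
  forall i, (i < size s)%N -> g (nth x0 s i) = nth x0 t i.
Proof.
move=> ss st st_size.
have [||g [ag gst]] := uhX (size s) (fun i : 'I_(size s) => nth x0 s i)
                           (fun i : 'I_(size s) => nth x0 t i).
- by move=> i j ij; apply: (sorted_ltn_nth lt_trans) => //; rewrite inE.
- by move=> i j ij; apply: (sorted_ltn_nth lt_trans) => //; rewrite inE -st_size.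
by exists g; split => // i lt_i; exact: (gst (Ordinal lt_i)).
Qed.

Lemma uh_map1 (x y : X) : exists g : X -> X, order_aut g /\ g x = y.
Proof.
have [g [ag gxy]] := uh_map_seq x [:: x] [:: y] erefl erefl erefl.
by exists g; split => //; exact: (gxy 0%N).
Qed.

Lemma uh_map2 {x1 x2 y1 y2 : X} : x1 < x2 -> y1 < y2 ->
  exists g : X -> X, order_aut g /\ g x1 = y1 /\ g x2 = y2.
Proof.
move=> x12 y12.
have [g [ag gxy]] := uh_map_seq x1 [:: x1; x2] [:: y1; y2]
  ltac:(by rewrite /= x12) ltac:(by rewrite /= y12) erefl.
by exists g; split => //; split; [exact: (gxy 0%N)|exact: (gxy 1%N)].
Qed.

Lemma uh_map3 {x1 x2 x3 y1 y2 y3 : X} :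
  x1 < x2 -> x2 < x3 -> y1 < y2 -> y2 < y3 ->
  exists g : X -> X, order_aut g /\ [/\ g x1 = y1, g x2 = y2 & g x3 = y3].
Proof.
move=> x12 x23 y12 y23.
have [g [ag gxy]] := uh_map_seq x1 [:: x1; x2; x3] [:: y1; y2; y3]
  ltac:(by rewrite /= x12 x23) ltac:(by rewrite /= y12 y23) erefl.
by exists g; split => //; split; [exact: (gxy 0%N)|exact: (gxy 1%N)|
                                  exact: (gxy 2%N)].
Qed.

Lemma exists_lt_pair : exists a b : X, a < b.
Proof.
have [x [y]] := ntX; rewrite neq_lt => /orP[xy|yx]; first by exists x, y.
by exists y, x.
Qed.

Lemma exists_gt (x : X) : exists y, x < y.
Proof.
have [a [b ab]] := exists_lt_pair; have [g [ag <-]] := uh_map1 a x.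
by exists (g b); rewrite order_aut_lt.
Qed.

Lemma exists_lt (x : X) : exists y, y < x.
Proof.
have [a [b ab]] := exists_lt_pair; have [g [ag <-]] := uh_map1 b x.
by exists (g a); rewrite order_aut_lt.
Qed.

Lemma exists_between {x y : X} : x < y -> exists2 z, x < z & z < y.
Proof.
move=> xy; have [w yw] := exists_gt y.
have [g [ag [<- <-]]] := uh_map2 (lt_trans xy yw) xy.
by exists (g y); rewrite order_aut_lt.
Qed.

Lemma AutG_order_aut (g : AutG X) : order_aut (sval g).
Proof. exact: set_mem (svalP g). Qed.

Lemma AutG_lt (g : AutG X) : {mono sval g : x y / x < y}.
Proof. exact/order_aut_lt/AutG_order_aut. Qed.

Lemma AutG_min (g : AutG X) x y :
  sval g (Order.min x y) = Order.min (sval g x) (sval g y).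
Proof. by rewrite !minElt AutG_lt; case: (x < y). Qed.

Lemma AutG_max (g : AutG X) x y :
  sval g (Order.max x y) = Order.max (sval g x) (sval g y).
Proof. by rewrite !maxElt AutG_lt; case: (x < y). Qed.

Definition AutG_of {g : X -> X} (ag : order_aut g) : AutG X :=
  exist _ (g : {ptws order_topology X -> order_topology X}) (mem_set ag).

Definition pt (x : X) : cmX X :=
  exist _ [set y | y <= x] (mem_set (or_introl (ex_intro _ x erefl))).

Lemma is_gap0 : is_gap X set0.
Proof.
split=> [x y _ []|x []|x _].
by have [y yx] := exists_lt x; exists y.
Qed.

Lemma is_gapT : is_gap X setT.
Proof.
split=> [//|x _|x /(_ I)[]].
by have [y xy] := exists_gt x; exists y.
Qed.

Definition infm : cmX X := exist _ set0 (mem_set (or_intror is_gap0)).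
Definition supm : cmX X := exist _ setT (mem_set (or_intror is_gapT)).

Lemma cm_leP (a b : cmX X) : a <= b <-> sval a `<=` sval b.
Proof. by split => /asboolP. Qed.

Lemma pt_le x (a : cmX X) : pt x <= a <-> sval a x.
Proof.
rewrite cm_leP; split => [ax|ax y /= yx]; first exact/ax/lexx.
exact: cm_downclosed yx ax.
Qed.

Lemma lt_pt (a : cmX X) x : a < pt x <-> ~ sval a x.
Proof.
by rewrite ltNge; split => [/negP nle /pt_le|nax]; last apply/negP => /pt_le.
Qed.

Lemma pt_lt x (a : cmX X) : pt x < a <-> exists2 w, sval a w & x < w.
Proof.
rewrite ltNge; split => [/negP nle|[w aw xw]].
  apply: contrapT => nw; apply: nle; apply/cm_leP => y ay /=.
  by rewrite leNgt; apply/negP => xy; apply: nw; exists y.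
by apply/negP => /cm_leP/(_ w aw); rewrite /= leNgt xw.
Qed.

Lemma pt_le_pt x y : pt x <= pt y <-> x <= y.
Proof. exact: pt_le. Qed.

Lemma pt_lt_pt x y : pt x < pt y <-> x < y.
Proof. by rewrite lt_pt /= ltNge; split => [/negP|/negP]. Qed.

Lemma inf_le (a : cmX X) : infm <= a.
Proof. exact/cm_leP. Qed.

Lemma le_sup (a : cmX X) : a <= supm.
Proof. exact/cm_leP. Qed.

Lemma pt_neq_inf x : pt x != infm.
Proof. by apply/eqP => /(congr1 sval)/seteqP[/(_ x (lexx x))]. Qed.

Lemma pt_neq_sup x : pt x != supm.
Proof.
have [y xy] := exists_gt x.
by apply/eqP => /(congr1 sval)/seteqP[_ /(_ y I)]; rewrite /= leNgt xy.
Qed.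

Lemma neq_inf_mem {a : cmX X} : a != infm -> exists y, sval a y.
Proof.
move=> ainf; apply: contrapT => nmem; move/eqP: ainf; apply.
by apply/val_inj/seteqP; split => // y ay; apply: nmem; exists y.
Qed.

Lemma neq_sup_lt_pt {a : cmX X} : a != supm -> exists y, a < pt y.
Proof.
move=> asup; apply: contrapT => nlt; move/eqP: asup; apply.
apply/val_inj/seteqP; split => // y _; apply: contrapT => nay.
by apply: nlt; exists y; exact/lt_pt.
Qed.

Lemma lt_pt_approx {a : cmX X} {x} : a < pt x -> exists2 s, s < x & a < pt s.
Proof.
move/lt_pt; case: a => A HA /=; case: (set_mem HA) => [[u eA]|[_ _ noMinB]] nAx.
  have ux : u < x by rewrite ltNge; apply/negP; rewrite eA in nAx.
  have [z uz zx] := exists_between ux; exists z => //.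
  by apply/lt_pt => /=; rewrite eA /= leNgt uz.
by have [y nAy yx] := noMinB x nAx; exists y => //; exact/lt_pt.
Qed.

Lemma pt_lt_approx {b : cmX X} {x} : pt x < b -> exists2 t, x < t & pt t < b.
Proof.
move/pt_lt => [w]; case: b => A HA /=.
case: (set_mem HA) => [[u eA]|[_ noMaxA _]] Aw xw.
  rewrite eA in Aw; have [t xt tu] := exists_between (lt_le_trans xw Aw).
  by exists t => //; apply/pt_lt; exists u => /=; rewrite ?eA /=.
by have [w' Aw' ww'] := noMaxA w Aw; exists w => //; apply/pt_lt; exists w'.
Qed.

Lemma nbhs_pt x (U : set (cmX X)) : nbhs (pt x) U ->
  exists s t, [/\ s < x, x < t & forall a, pt s <= a -> a <= pt t -> U a].
Proof.
rewrite itv_nbhsE => -[[[[] l|[]] [[] r|[]]] [oi xi] iU] //.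
all: move: xi iU; rewrite /= ?in_itv /= ?andbT => xi iU.
- case/andP: xi => lx xr.
  have [s sx ls] := lt_pt_approx lx; have [t xt tr] := pt_lt_approx xr.
  exists s, t; split => // a sa at'; apply: iU; rewrite /= in_itv /=.
  by rewrite (lt_le_trans ls sa) (le_lt_trans at' tr).
- have [s sx ls] := lt_pt_approx xi; have [t xt] := exists_gt x.
  exists s, t; split => // a sa _; apply: iU; rewrite /= in_itv /= andbT.
  exact: lt_le_trans ls sa.
- have [s sx] := exists_lt x; have [t xt tr] := pt_lt_approx xi.
  exists s, t; split => // a _ at'; apply: iU; rewrite /= in_itv /=.
  exact: le_lt_trans at' tr.
- have [s sx] := exists_lt x; have [t xt] := exists_gt x.
  by exists s, t; split => // a _ _; apply: iU; rewrite /= in_itv.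
Qed.


Lemma nbhs_inf (U : set (cmX X)) : nbhs infm U ->
  exists s, forall a, a <= pt s -> U a.
Proof.
rewrite itv_nbhsE => -[[[[] l|[]] [[] r|[]]] [oi xi] iU] //.
all: move: xi iU; rewrite /= ?in_itv /= ?andbT => xi iU.
- by case/andP: xi; rewrite ltNge inf_le.
- by move: xi; rewrite ltNge inf_le.
- have [y ry] := neq_inf_mem (negbT (gt_eqF xi)); have [s sy] := exists_lt y.
  exists s => a a_s; apply: iU; rewrite /= in_itv /=.
  by apply: le_lt_trans a_s _; apply/pt_lt; exists y.
- by have [s _] := exists_lt_pair; exists s => a _; apply: iU; rewrite /= in_itv.
Qed.

Lemma act_pt (g : AutG X) x : act_m X g (pt x) = pt (sval g x).
Proof.
have [[h gh hg] mg] := AutG_order_aut g.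
apply: val_inj; apply/seteqP; split => [_ [y yx <-]|z zx] /=; first by rewrite mg.
by exists (h z); rewrite //= -mg hg.
Qed.

Lemma act_inf (g : AutG X) : act_m X g infm = infm.
Proof. by apply: val_inj; rewrite /= image_set0. Qed.

Lemma act_sup (g : AutG X) : act_m X g supm = supm.
Proof.
have [[h _ hg] _] := AutG_order_aut g.
by apply: val_inj; apply/seteqP; split => // z _; exists (h z).
Qed.

Lemma act_mono (g : AutG X) : {homo act_m X g : a b / a <= b}.
Proof. by move=> a b /cm_leP ab; apply/cm_leP; exact: image_subset. Qed.

Lemma pt_le_act (g : AutG X) {a : cmX X} {y} :
  sval a y -> pt (sval g y) <= act_m X g a.
Proof. by move=> ay; apply/pt_le; exists y. Qed.

Lemma act_le_pt (g : AutG X) {a : cmX X} {y} :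
  a <= pt y -> act_m X g a <= pt (sval g y).
Proof. by rewrite -act_pt; exact: act_mono. Qed.

Lemma cvg_act_fixed {F : set_system (AutG X)} {a : cmX X} : Filter F ->
  (forall g, act_m X g a = a) -> (fun g => act_m X g a) @ F --> a.
Proof. by move=> FF fix_a; under eq_fun do rewrite fix_a; exact: cvg_cst. Qed.

Lemma pi_eq_cases (a b : cmX X) :
  \pi_(cX X) a = \pi_(cX X) b -> a = b \/ a = infm \/ a = supm.
Proof.
move=> eq_ab; have := eqmodE (inf_sup_equiv X) a b; rewrite /= eq_ab eqxx.
case/esym/orP=> [/eqP ->|/andP[/andP[_ a01] _]]; [by left|right].
by move: a01; rewrite inE => -[] a01; [left|right]; exact: val_inj.
Qed.

Lemma pi_eq_pt (c : cmX X) x : \pi_(cX X) c = \pi_(cX X) (pt x) -> c = pt x.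
Proof.
move=> /esym/pi_eq_cases[->//|[] pt_infsup].
  by move: (pt_neq_inf x); rewrite pt_infsup eqxx.
by move: (pt_neq_sup x); rewrite pt_infsup eqxx.
Qed.

Lemma repr_pi_pt x : repr (\pi_(cX X) (pt x)) = pt x.
Proof. by apply: pi_eq_pt; rewrite reprK. Qed.

Lemma act_c_pt (g : AutG X) x :
  act_c X g (\pi_(cX X) (pt x)) = \pi_(cX X) (pt (sval g x)).
Proof. by rewrite /act_c repr_pi_pt act_pt. Qed.

Definition quot_map (f : cmX X -> cmX X) (q : cX X) : cX X :=
  \pi_(cX X) (f (repr q)).

Lemma quot_map_pt (f : cmX X -> cmX X) x :
  quot_map f (\pi_(cX X) (pt x)) = \pi_(cX X) (f (pt x)).
Proof. by rewrite /quot_map repr_pi_pt. Qed.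

Lemma cvg_act_c {F : set_system (AutG X)} {f : cmX X -> cmX X} : Filter F ->
  (forall a, (fun g => act_m X g a) @ F --> f a) ->
  forall q, (fun g => act_c X g q) @ F --> quot_map f q.
Proof.
move=> FF cvg_f q.
exact: cvg_trans (cvg_app (\pi_(cX X)) (cvg_f (repr q))) (@pi_continuous _ _ _).
Qed.

Variable x0 : X.

Definition b_m (a : cmX X) : cmX X :=
  if (a == infm) || (a == supm) then a else pt x0.

(* Along Fb, y0 -> -oo, y1 -> +oo and t -> x0 from above. *)
Definition Fb : set_system (AutG X) :=
  filter_from [set i | let: (y0, y1, t) := i in [/\ y0 < x0, x0 < y1 & x0 < t]]
    (fun i => let: (y0, y1, t) := i in
       [set g | x0 < sval g y0 /\ sval g y1 <= t]).

#[local] Instance Fb_proper : ProperFilter Fb.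
Proof.
apply: filter_from_proper; last first.
  move=> [[y0 y1] t] [y0x xy1 xt]; have [u xu ut] := exists_between xt.
  have [g [ag [gy0 gy1]]] := uh_map2 (lt_trans y0x xy1) ut.
  by exists (AutG_of ag); rewrite /= gy0 gy1.
apply: filter_from_filter.
  have [y0 y0x] := exists_lt x0; have [t xt] := exists_gt x0.
  by exists (y0, t, t).
move=> [[y0 y1] t] [[y0' y1'] t'] [y0x xy1 xt] [_ _ xt'].
exists (Order.min y0 y0', Order.max y1 y1', Order.min t t').
  by split; rewrite ?gt_min ?lt_max ?lt_min ?y0x ?xy1 ?xt ?xt'.
move=> g /= [+ +]; rewrite AutG_min AutG_max lt_min ge_max !le_min.
by move=> /andP[gy0 gy0'] /andP[/andP[gy1t _] /andP[_ gy1t']].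
Qed.

Lemma cvg_b_m (a : cmX X) : (fun g => act_m X g a) @ Fb --> b_m a.
Proof.
rewrite /b_m; have [->|ainf] /= := eqVneq a infm.
  exact: cvg_act_fixed Fb_proper act_inf.
have [->|asup] /= := eqVneq a supm; first exact: cvg_act_fixed Fb_proper act_sup.
move=> U /nbhs_pt[s [t [sx xt stU]]].
have [y ay] := neq_inf_mem ainf; have [y' ay'] := neq_sup_lt_pt asup.
have [y0] := exists_lt (Order.min y x0); rewrite lt_min => /andP[y0y y0x].
have [y1] := exists_gt (Order.max y' x0); rewrite gt_max => /andP[y'y1 xy1].
exists (y0, y1, t); first by split.
move=> g [gy0 gy1]; apply: stU.
  apply: le_trans _ (pt_le_act g (cm_downclosed X a _ _ (ltW y0y) ay)).
  exact/pt_le_pt/ltW/(lt_trans sx gy0).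
have ay1 : a <= pt y1 by apply: le_trans (ltW ay') _; exact/pt_le_pt/ltW.
by apply: le_trans (act_le_pt g ay1) _; exact/pt_le_pt.
Qed.

Lemma Fb_moves_up : Fb [set g | x0 < sval g x0].
Proof.
have [y0 y0x] := exists_lt x0; have [t xt] := exists_gt x0.
exists (y0, t, t) => [|g [gy0 _]]; first by split.
by rewrite /= (lt_trans gy0) // AutG_lt.
Qed.

Lemma b_m_pt y : b_m (pt y) = pt x0.
Proof. by rewrite /b_m (negbTE (pt_neq_inf y)) (negbTE (pt_neq_sup y)). Qed.

Definition p_m (a : cmX X) : cmX X :=
  if a <= pt x0 then infm else if a == supm then supm else pt x0.

Lemma p_m_le (a : cmX X) : a <= pt x0 -> p_m a = infm.
Proof. by rewrite /p_m => ->. Qed.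

Lemma p_m_gt y : x0 < y -> p_m (pt y) = pt x0.
Proof.
move=> xy; rewrite /p_m (negbTE (pt_neq_sup y)).
by have /negbTE -> : ~~ (pt y <= pt x0) by rewrite -ltNge; exact/pt_lt_pt.
Qed.

(* Along Fp, s -> -oo, y -> x0 from above, y1 -> +oo and v -> x0 from above. *)
Definition Fp : set_system (AutG X) :=
  filter_from [set i | let: (s, y, y1, v) := i in [/\ x0 < y, y < y1 & x0 < v]]
    (fun i => let: (s, y, y1, v) := i in
       [set g | [/\ sval g x0 <= s, x0 <= sval g y & sval g y1 <= v]]).

#[local] Instance Fp_proper : ProperFilter Fp.
Proof.
apply: filter_from_proper; last first.
  move=> [[[s y] y1] v] [xy yy1 xv].
  have [s'] := exists_lt (Order.min s x0); rewrite lt_min => /andP[s's s'x].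
  have [g [ag [gx gy gy1]]] := uh_map3 xy yy1 s'x xv.
  by exists (AutG_of ag); rewrite /= gx gy gy1 (ltW s's).
apply: filter_from_filter.
  have [y xy] := exists_gt x0; have [y1 yy1] := exists_gt y.
  by exists (x0, y, y1, y).
move=> [[[s y] y1] v] [[[s' y'] y1'] v'] [xy yy1 xv] [xy' _ xv'].
exists (Order.min s s', Order.min y y', Order.max y1 y1', Order.min v v').
  by split; rewrite ?lt_min ?lt_max ?gt_min ?xy ?xv ?xv' ?yy1.
move=> g /= [+ + +]; rewrite AutG_min AutG_max !le_min !ge_max.
by move=> /andP[gs gs'] /andP[gy gy'] /andP[/andP[gy1v _] /andP[_ gy1v']].
Qed.

Lemma cvg_p_m (a : cmX X) : (fun g => act_m X g a) @ Fp --> p_m a.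
Proof.
rewrite /p_m; case: ifPn => [ax|].
  move=> U /nbhs_inf[s sU].
  have [y xy] := exists_gt x0; have [y1 yy1] := exists_gt y.
  exists (s, y, y1, y); first by split.
  move=> g [gx _ _]; apply: sU.
  by apply: le_trans (act_le_pt g ax) _; exact/pt_le_pt.
rewrite -ltNge => /pt_lt[w aw xw].
have [->|asup] := eqVneq a supm; first exact: cvg_act_fixed Fp_proper act_sup.
move=> U /nbhs_pt[u [v [ux xv uvU]]].
have [y' ay'] := neq_sup_lt_pt asup.
have wy' : w < y' by apply/pt_lt_pt; apply: le_lt_trans ay'; exact/pt_le.
exists (x0, w, y', v); first by split.
move=> g [_ gw gy']; apply: uvU.
  by apply: le_trans _ (pt_le_act g aw); exact/pt_le_pt/(le_trans (ltW ux) gw).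
by apply: le_trans (act_le_pt g (ltW ay')) _; exact/pt_le_pt.
Qed.

Lemma not_ellis_is_sm_m : ~ ellis_is_sm (@Aut_mul d X) (Aut_one X) (@act_m d X).
Proof.
have [w wx] := exists_lt x0.
apply: (@not_ellis_is_sm _ _ _ _ _ _ _ _ (pt x0) _ Fb_proper
  (ellis_cvg Fp_proper (ptws_cvg_of_coord _ cvg_p_m))
  (ptws_cvg_of_coord _ cvg_b_m) (lray_open (pt w))).
- by rewrite b_m_pt p_m_le // /= in_itv /=; apply/lt_pt.
- move: Fb_moves_up; apply: filterS => g /= xgx.
  rewrite act_pt p_m_gt // in_itv /= => /pt_lt_pt.
  by rewrite ltNge (ltW wx).
Qed.

Lemma not_ellis_is_sm_c : ~ ellis_is_sm (@Aut_mul d X) (Aut_one X) (@act_c d X).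
Proof.
have [w wx] := exists_lt x0; have [w' xw'] := exists_gt x0.
pose V : set (cmX X) := setU `]-oo, pt w[ `]pt w', +oo[.
have V_inf : V infm by left; rewrite /= in_itv /=; apply/lt_pt.
have V_sup : V supm.
  by right; rewrite /= in_itv /= andbT lt_neqAle le_sup andbT pt_neq_sup.
have V_sat : \pi_(cX X) @^-1` (\pi_(cX X) @` V) = V.
  apply/seteqP; split => [c [c' Vc' /esym/pi_eq_cases[->|[]->]]|c Vc] //.
  by exists c.
have oV : open (\pi_(cX X) @` V : set (cX X)).
  rewrite /open /= /quotient_open V_sat; exact: openU (lray_open _) (rray_open _).
apply: (@not_ellis_is_sm _ _ _ _ _ _ _ _ (\pi_(cX X) (pt x0)) _ Fb_proper
  (ellis_cvg Fp_proper (ptws_cvg_of_coord _ (cvg_act_c _ cvg_p_m)))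
  (ptws_cvg_of_coord _ (cvg_act_c _ cvg_b_m)) oV).
- by rewrite quot_map_pt b_m_pt quot_map_pt p_m_le //; exists infm.
- move: Fb_moves_up; apply: filterS => g /= xgx.
  rewrite act_c_pt quot_map_pt p_m_gt // => -[c Vc /pi_eq_pt cx0].
  move: Vc; rewrite cx0 => -[]; rewrite /= in_itv /= ?andbT => /pt_lt_pt.
    by rewrite ltNge (ltW wx).
  by rewrite ltNge (ltW xw').
Qed.

End UltrahomogeneousChain.

Theorem mainTheorem15 (d : Order.disp_t) (X : orderType d) :
  infinite_set [set: X] -> ultrahomogeneous X ->
  ~ ellis_is_sm (@Aut_mul d X) (Aut_one X) (@act_m d X) /\
  ~ ellis_is_sm (@Aut_mul d X) (Aut_one X) (@act_c d X).
Proof.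
move=> /infinite_set_exists_neq ntX uhX; have [x0 _] := ntX.
split; first exact: not_ellis_is_sm_m ntX uhX x0.
exact: not_ellis_is_sm_c ntX uhX x0.
Qed.
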